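(* Let $\Gamma\neq\mathbb N$ be a numerical semigroup that is a complete intersection, minimally generated by $\{r_0,\ldots,r_h\}$. If $\mathrm m(\Gamma)\neq 2$, then $r_k<\mathrm F(\Gamma)$ for all $k\in\{0,\ldots,h\}$.
   Context: A numerical semigroup $\Gamma$ is a submonoid of $(\mathbb N,+)$ with finite complement in $\mathbb N$. It has a unique minimal generating system, whose cardinality is the embedding dimension $\mathrm e(\Gamma)$ and whose smallest element is the multiplicity $\mathrm m(\Gamma)$. The Frobenius number $\mathrm F(\Gamma)$ is the largest integer not in $\Gamma$. With minimal generators $r_0,\ldots,r_h$, let $\varphi:\mathbb N^{h+1}\to\Gamma$, $\varphi(a)=\sum a_ir_i$; a presentation of $\Gamma$ is a generating set of the congruence $\ker\varphi=\{(a,b):\varphi(a)=\varphi(b)\}$, and a minimal presentation is an inclusion-minimal one (its cardinality is always at least $\mathrm e(\Gamma)-1$). $\Gamma$ is a complete intersection if a minimal presentation has cardinality $\mathrm e(\Gamma)-1$. *)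

From mathcomp Require Import all_boot.
Set Implicit Arguments.
Unset Strict Implicit.
Unset Printing Implicit Defensive.

Definition numerical_semigroup (G : nat -> Prop) : Prop :=
  [/\ G 0,
      (forall x y, G x -> G y -> G (x + y)) &
      exists N, forall n, N <= n -> G n].

Definition vec (n : nat) := {ffun 'I_n -> nat}.

Definition vadd n (a b : vec n) : vec n := [ffun i => a i + b i].

Definition phi h (r : 'I_h.+1 -> nat) (a : vec h.+1) : nat :=
  \sum_(i < h.+1) a i * r i.

Definition minimally_generated_by (G : nat -> Prop) h (r : 'I_h.+1 -> nat) : Prop :=
  [/\ injective r,
      (forall x, G x <-> exists a : vec h.+1, x = phi r a) &
      (forall i, ~ exists a : vec h.+1, a i = 0 /\ r i = phi r a)].

Definition is_multiplicity (G : nat -> Prop) (m : nat) : Prop :=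
  [/\ 0 < m, G m & forall x, G x -> 0 < x -> m <= x].

Definition is_frobenius (G : nat -> Prop) (f : nat) : Prop :=
  ~ G f /\ (forall n, f < n -> G n).

Inductive cong_gen n (rho : vec n * vec n -> Prop) : vec n -> vec n -> Prop :=
| cg_base a b : rho (a, b) -> cong_gen rho a b
| cg_refl a : cong_gen rho a a
| cg_sym a b : cong_gen rho a b -> cong_gen rho b a
| cg_trans a b c : cong_gen rho a b -> cong_gen rho b c -> cong_gen rho a c
| cg_add a b c : cong_gen rho a b -> cong_gen rho (vadd a c) (vadd b c).

Definition presentation h (r : 'I_h.+1 -> nat) (s : seq (vec h.+1 * vec h.+1)) : Prop :=
  forall a b, cong_gen (fun p => p \in s) a b <-> phi r a = phi r b.

Definition minimal_presentation h (r : 'I_h.+1 -> nat) (s : seq (vec h.+1 * vec h.+1)) : Prop :=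
  presentation r s /\
  forall s' : seq (vec h.+1 * vec h.+1),
    {subset s' <= s} -> presentation r s' -> {subset s <= s'}.

(* complete intersection: some minimal presentation has cardinality
   e(Gamma) - 1 = (h+1) - 1 = h *)
Definition complete_intersection h (r : 'I_h.+1 -> nat) : Prop :=
  exists s : seq (vec h.+1 * vec h.+1),
    [/\ uniq s, size s = h & minimal_presentation r s].

From mathcomp Require Import all_boot zify.

Set Implicit Arguments.
Unset Strict Implicit.
Unset Printing Implicit Defensive.

(* Write e_i for the unit vectors of N^(h+1) and suppose F < r_K for a largest
   generator r_K; let r_p be the smallest one.  For j <> p the factorization
   e_K + e_j of r_K + r_j is rigid (every other factorization has disjoint
   support, as e_K and e_j are atoms) but not unique, because
   r_K + r_j - r_p > F lies in Gamma.  A rigid vector can only leave its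
   congruence class through a relation having it on exactly one side, so a
   presentation needs one relation per j <> p; in a complete intersection these
   are all h relations.  Each side of a relation is then either some e_K + e_j
   or has no K-coordinate and value r_K + r_j > r_K + r_p.  Hence, for
   r_K <= t r_p <= r_K + r_p, the vector e_K + t e_p dominates no side of any
   relation and is the only factorization of its value; yet that value is r_i
   plus an element above F for any third generator r_i.  With two generators
   the factorizations of 2 r_K - r_p force r_p | 2, i.e. multiplicity 2, and a
   single generator gives Gamma = N. *)

Section Vectors.
Variable n : nat.
Implicit Types (a b c : vec n) (i x : 'I_n).

Definition unitv i : vec n := [ffun x => (x == i) : nat].
Definition scalev (t : nat) a : vec n := [ffun x => t * a x].
Definition vle a b : bool := [forall x, a x <= b x].

Lemma vaddE a b x : vadd a b x = a x + b x.
Proof. by rewrite ffunE. Qed.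

Lemma unitvE i x : unitv i x = (x == i).
Proof. by rewrite ffunE. Qed.

Lemma scalevE t a x : scalev t a x = t * a x.
Proof. by rewrite ffunE. Qed.

Lemma vaddC a b : vadd a b = vadd b a.
Proof. by apply/ffunP => x; rewrite !vaddE addnC. Qed.

Lemma vle_refl a : vle a a.
Proof. exact/forallP. Qed.

Lemma vle_addr a b c : vle a b -> vle a (vadd b c).
Proof.
by move=> /forallP le_ab; apply/forallP => x; rewrite vaddE (leq_trans (le_ab x)) ?leq_addr.
Qed.

Lemma vsplit_unitv b i : 0 < b i -> exists c, b = vadd (unitv i) c.
Proof.
move=> bi_gt0; exists [ffun x => b x - (x == i)]; apply/ffunP => x.
by rewrite vaddE unitvE ffunE; case: eqP => [->|] /=; lia.
Qed.

End Vectors.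

Section Factorizations.
Variables (h : nat) (r : 'I_h.+1 -> nat).
Implicit Types (a b c : vec h.+1).

Lemma phiD a b : phi r (vadd a b) = phi r a + phi r b.
Proof. by rewrite /phi -big_split; apply: eq_bigr => i _; rewrite vaddE mulnDl. Qed.

Lemma phiZ t a : phi r (scalev t a) = t * phi r a.
Proof. by rewrite /phi big_distrr; apply: eq_bigr => i _; rewrite scalevE -mulnA. Qed.

Lemma phi_unitv i : phi r (unitv i) = r i.
Proof.
rewrite /phi (bigD1 i) //= big1 => [|j ji]; first by rewrite unitvE eqxx mul1n addn0.
by rewrite unitvE (negbTE ji).
Qed.

Lemma leq_phi a b : vle a b -> phi r a <= phi r b.
Proof. by move=> /forallP le_ab; apply: leq_sum => i _; rewrite leq_mul2r le_ab orbT. Qed.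

Lemma phi_eq0 a : (forall i, 0 < r i) -> phi r a = 0 -> a = [ffun => 0].
Proof.
move=> r_gt0 /eqP; rewrite sum_nat_eq0 => /forallP a0.
apply/ffunP => x; rewrite ffunE; move: (a0 x); rewrite muln_eq0 => /orP[/eqP //|].
by rewrite (gtn_eqF (r_gt0 x)).
Qed.

Definition rigid (w : vec h.+1) :=
  forall b, phi r b = phi r w -> (exists x, 0 < w x /\ 0 < b x) -> b = w.

End Factorizations.

Section Congruence.
Variables (n : nat) (rho : vec n * vec n -> Prop).

Definition isolated (a : vec n) := forall q, rho q -> ~~ vle q.1 a /\ ~~ vle q.2 a.

Lemma isolated_vaddl a c : isolated (vadd a c) -> isolated a.
Proof.
move=> iso q /iso[q1 q2].
by split; [move: q1 | move: q2]; apply: contra; apply: vle_addr.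
Qed.

Lemma cong_gen_isolated_sym a b :
  cong_gen rho a b -> (isolated a -> a = b) /\ (isolated b -> a = b).
Proof.
elim=> {a b} [a b rho_ab|a|a b _ [IHa IHb]|a b c _ [IHab IHba] _ [IHbc IHcb]|
              a b c _ [IHa IHb]].
- by split=> iso; have [] := iso _ rho_ab; rewrite vle_refl.
- by split.
- by split=> iso; [rewrite IHb | rewrite IHa].
- split=> iso; [have ab := IHab iso | have bc := IHcb iso]; subst b.
  + exact: IHbc.
  + exact: IHba.
- by split=> /isolated_vaddl iso; [rewrite IHa | rewrite IHb].
Qed.

Lemma cong_gen_isolated a b : cong_gen rho a b -> isolated a -> a = b.
Proof. by case/cong_gen_isolated_sym. Qed.

End Congruence.

Section Rigidity.
Variables (h : nat) (r : 'I_h.+1 -> nat) (rho : vec h.+1 * vec h.+1 -> Prop).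
Hypothesis rho_phi : forall q, rho q -> phi r q.1 = phi r q.2.

Lemma cong_gen_phi a b : cong_gen rho a b -> phi r a = phi r b.
Proof.
elim=> {a b} [a b /rho_phi //|//|a b _ -> //|a b c _ -> _ -> //|a b c _ eq_ab].
by rewrite !phiD eq_ab.
Qed.

Lemma cong_gen_rigid w a b : rigid r w -> cong_gen rho a b ->
  (a == w) = (b == w) \/ exists2 q, rho q & (q.1 == w) != (q.2 == w).
Proof.
move=> rigid_w; elim=> {a b} [a b rho_ab|a|a b _ IH|a b c _ IHab _ IHbc|a b c ab IH].
- by case: (eqVneq (a == w) (b == w)); [left|right; exists (a, b)].
- by left.
- by case: IH => [->|]; [left|right].
- by case: IHab => [->|]; [case: IHbc; [left|right]|right].
- case: IH => [eq_ab|]; last by right.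
  left; have phi_ab := cong_gen_phi ab.
  have [/forallP c0|] := boolP [forall x, c x == 0].
    suff vadd0 v : vadd v c = v by rewrite !vadd0.
    by apply/ffunP => y; rewrite vaddE (eqP (c0 y)) addn0.
  rewrite negb_forall => /existsP[x]; rewrite -lt0n => cx.
  have move_w u v : phi r u = phi r v -> vadd u c = w -> vadd v c = w.
    move=> phi_uv uc_w; apply: rigid_w; first by rewrite -uc_w !phiD phi_uv.
    by exists x; rewrite -uc_w !vaddE; split; apply: ltn_addl.
  by apply/eqP/eqP; [apply: move_w | apply: move_w (esym phi_ab)].
Qed.

End Rigidity.

Lemma eventually_dvdn_eq1 d f : (forall n, f < n -> d %| n) -> d = 1.
Proof.
move=> dvd_d; apply/eqP; rewrite -dvdn1 -(dvdn_addr 1 (dvd_d f.+1 (ltnSn f))) addn1.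
exact: dvd_d.
Qed.

Lemma inj_image_cover (I : finType) (T : eqType) (S : {pred I}) (g : I -> T) (s : seq T) :
  uniq s -> size s <= #|S| -> {in S, forall i, g i \in s} -> {in S &, injective g} ->
  forall x, x \in s -> exists2 i, i \in S & x = g i.
Proof.
move=> s_uniq s_size g_s g_inj.
have img_uniq : uniq [seq g i | i in S].
  by rewrite map_inj_in_uniq ?enum_uniq // => i j; rewrite !mem_enum; apply: g_inj.
have img_sub : {subset [seq g i | i in S] <= s} by move=> _ /imageP[i Si ->]; apply: g_s.
have img_size : size s <= size [seq g i | i in S] by rewrite size_image.
have [_ eq_s] := uniq_min_size img_uniq img_sub img_size.
by move=> x; rewrite -eq_s => /imageP.
Qed.

Lemma ord_third n (i j : 'I_n) : 2 < n -> exists k : 'I_n, (k != i) && (k != j).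
Proof.
move=> n_gt2; have : 0 < #|~: [set i; j]|.
  by have := cardsC [set i; j]; rewrite cards2 card_ord; case: (i != j); lia.
by case/card_gt0P=> k; rewrite in_setC in_set2 negb_or; exists k.
Qed.

Lemma ord_le2_cases n (i j x : 'I_n) : n <= 2 -> i != j -> x = i \/ x = j.
Proof.
move=> n_le2 ij; case: (eqVneq x i) => [|xi]; [by left | right; apply: val_inj].
by move: ij xi (ltn_ord i) (ltn_ord j) (ltn_ord x); rewrite -!val_eqE /=; lia.
Qed.

Lemma argmin_neq_argmax (I : finType) (F : I -> nat) (i j x y : I) : injective F ->
  i != j -> (forall k, F x <= F k) -> (forall k, F k <= F y) -> x != y.
Proof.
move=> F_inj ij x_min y_max; apply: contraNneq ij => xy.
apply/eqP/F_inj; have := x_min i; have := x_min j; have := y_max i; have := y_max j.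
by rewrite xy; lia.
Qed.

Section MinimalGenerators.
Variables (G : nat -> Prop) (h : nat) (r : 'I_h.+1 -> nat) (f : nat).
Hypotheses (G_phi : forall x, G x <-> exists a, x = phi r a)
  (r_min : forall i, ~ exists a : vec h.+1, a i = 0 /\ r i = phi r a)
  (Gf : ~ G f) (G_gtf : forall n, f < n -> G n).

Lemma gen_gt0 i : 0 < r i.
Proof.
rewrite lt0n; apply/eqP => ri0; apply: (@r_min i).
by exists (scalev 0 (unitv i)); rewrite scalevE phiZ ri0.
Qed.

Lemma phi_eq_gen j c : phi r c = r j -> c = unitv j.
Proof.
move=> phi_c; have [|c' c_eq] := @vsplit_unitv _ c j.
  by rewrite lt0n; apply/eqP => cj0; apply: (@r_min j); exists c.
move: phi_c; rewrite c_eq phiD phi_unitv -{2}[r j]addn0 => /addnI /(phi_eq0 gen_gt0) ->.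
by apply/ffunP => x; rewrite !ffunE addn0.
Qed.

Lemma phi_eq_unitvD b i j :
  phi r b = r i + r j -> 0 < b i -> b = vadd (unitv i) (unitv j).
Proof.
move=> phi_b /vsplit_unitv[c c_eq]; move: phi_b.
by rewrite c_eq phiD phi_unitv => /addnI /phi_eq_gen ->.
Qed.

Lemma rigid_unitvD i j : rigid r (vadd (unitv i) (unitv j)).
Proof.
move=> b; rewrite phiD !phi_unitv => phi_b [x []]; rewrite vaddE !unitvE.
case: (x =P i) => [-> _|_]; first exact: phi_eq_unitvD.
case: (x =P j) => [-> _ bj|//]; rewrite vaddC.
by apply: phi_eq_unitvD; rewrite // addnC.
Qed.

Lemma phi_gtf x : f < x -> exists a, x = phi r a.
Proof. by move/G_gtf/G_phi. Qed.

Lemma gen_neq1 i : r i != 1.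
Proof.
apply/eqP => ri1; apply: Gf; apply/G_phi.
by exists (scalev f (unitv i)); rewrite phiZ phi_unitv ri1 muln1.
Qed.

Lemma single_generator_absurd i : (forall x : 'I_h.+1, x = i) -> False.
Proof.
move=> all_i; have phi1 a : phi r a = a i * r i.
  by rewrite /phi (bigD1 i) //= big1 ?addn0 // => x; rewrite (all_i x) eqxx.
have ri1 : r i = 1.
  by apply: (@eventually_dvdn_eq1 _ f) => n /phi_gtf[c ->]; rewrite phi1 dvdn_mull.
by move: (gen_neq1 i); rewrite ri1.
Qed.

Lemma two_generators_absurd p K : (forall x, x = p \/ x = K) ->
  r p < r K -> f < r K -> ~ is_multiplicity G 2 -> False.
Proof.
move=> pK_only ltpK fK not_m2; have pK : p != K by apply: contraTneq ltpK => ->; rewrite ltnn.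
have phi2 a : phi r a = a p * r p + a K * r K.
  rewrite /phi (bigD1 p) //= (bigD1 K) 1?eq_sym //= big1 ?addn0 // => x /andP[xp xK].
  by case: (pK_only x) xp xK => ->; rewrite eqxx.
have coprime_pK : coprime (r p) (r K).
  apply/eqP; apply: (@eventually_dvdn_eq1 _ f) => n /phi_gtf[a ->].
  by rewrite phi2 dvdn_add // dvdn_mull // ?dvdn_gcdl ?dvdn_gcdr.
have [c] : exists c, r K + r K - r p = phi r c by apply: phi_gtf; lia.
rewrite phi2 => eq_c.
have cK0 : c K = 0.
  move: eq_c; case: (c K) => [//|[|k]] eq_c; last by move: eq_c (gen_gt0 p); rewrite !mulSn; lia.
  case: (@r_min K); exists (scalev (c p).+1 (unitv p)).
  by rewrite scalevE unitvE eq_sym (negbTE pK) muln0 phiZ phi_unitv mulSn; lia.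
have : r p %| 2.
  by rewrite -(Gauss_dvdr _ coprime_pK); apply/dvdnP; exists (c p).+1; rewrite mulSn; lia.
move/(dvdn_leq (isT : 0 < 2)); have := gen_gt0 p; have := gen_neq1 p.
case: (r p =P 2) => [rp2 _ _ _|]; last lia.
apply: not_m2; split=> //; first by apply/G_phi; exists (unitv p); rewrite phi_unitv.
by move=> x /G_phi[a ->]; rewrite phi2 rp2; case: (a K); lia.
Qed.

Section CompleteIntersection.
Variables (P : seq (vec h.+1 * vec h.+1)) (p K : 'I_h.+1).
Hypotheses (r_inj : injective r) (P_pres : presentation r P) (P_uniq : uniq P)
  (P_size : size P = h) (p_min : forall i, r p <= r i) (K_max : forall i, r i <= r K)
  (pK : p != K) (fK : f < r K).

Lemma ltr_p j : j != p -> r p < r j.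
Proof. by move=> jp; rewrite ltn_neqAle p_min andbT (inj_eq r_inj) eq_sym. Qed.

Lemma P_phi q : q \in P -> phi r q.1 = phi r q.2.
Proof. by move=> Pq; apply/P_pres/cg_base; rewrite -surjective_pairing. Qed.

Let w j := vadd (unitv K) (unitv j).
Let touches j (q : vec h.+1 * vec h.+1) := (q.1 == w j) != (q.2 == w j).

Lemma phi_w j : phi r (w j) = r K + r j.
Proof. by rewrite phiD !phi_unitv. Qed.

Lemma P_touches j : j != p -> exists2 q, q \in P & touches j q.
Proof.
move=> jp; have := p_min j => le_pj.
have [c phi_c] : exists c, r K + r j - r p = phi r c by apply: phi_gtf; lia.
have w_cong : cong_gen (fun q => q \in P) (w j) (vadd (unitv p) c).
  by apply/P_pres; rewrite phi_w phiD phi_unitv -phi_c; lia.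
case: (cong_gen_rigid P_phi (@rigid_unitvD K j) w_cong) => [|//].
rewrite eqxx => /esym/eqP/(congr1 (fun v : vec h.+1 => v p)).
by rewrite !vaddE !unitvE eqxx (negbTE pK) (eq_sym p j) (negbTE jp).
Qed.

Lemma touches_phi j q : q \in P -> touches j q -> phi r q.1 = r K + r j.
Proof.
rewrite /touches -phi_w => Pq; case: (eqVneq q.1 (w j)) => [-> // | _].
by rewrite (P_phi Pq); case: (q.2 =P w j) => [->|].
Qed.

Lemma P_touched q : q \in P -> exists2 j, j != p & touches j q.
Proof.
have ex_touch j : exists q, (j == p) || (q \in P) && touches j q.
  case: (eqVneq j p) => [_|/P_touches[q' Pq' tq']]; first by exists q.
  by exists q'; rewrite Pq' tq' orbT.
pose g j := xchoose (ex_touch j).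
have g_touch j : j != p -> (g j \in P) && touches j (g j).
  by move=> /negbTE jp; case/orP: (xchooseP (ex_touch j)); rewrite ?jp.
move=> Pq; have [|||j jp ->] := @inj_image_cover _ _ (predC1 p) g P P_uniq _ _ _ q Pq.
- by rewrite cardC1 card_ord P_size.
- by move=> j /g_touch/andP[].
- move=> j j' jp j'p gj.
  have /andP[Pj tj] := g_touch j jp; have /andP[Pj' tj'] := g_touch j' j'p.
  apply: r_inj; apply/eqP; rewrite -(eqn_add2l (r K)) -(touches_phi Pj tj) gj.
  by rewrite (touches_phi Pj' tj').
- by exists j => //; have /andP[] := g_touch j jp.
Qed.

Lemma P_component q s : q \in P -> s = q.1 \/ s = q.2 ->
  exists2 j, j != p & s = w j \/ s K = 0 /\ phi r s = r K + r j.
Proof.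
move=> Pq s_q; have [j jp tj] := P_touched Pq; exists j => //.
have phi_s : phi r s = phi r (w j).
  by rewrite phi_w; case: s_q => ->; rewrite -?(P_phi Pq) (touches_phi Pq tj).
case: (posnP (s K)) => [sK0|sK_gt0]; [right | left]; first by rewrite -phi_w.
apply: (@rigid_unitvD K j s phi_s); exists K.
by rewrite vaddE unitvE eqxx.
Qed.

Let a t := vadd (unitv K) (scalev t (unitv p)).

Lemma w_not_vle_a j t : j != p -> ~~ vle (w j) (a t).
Proof.
move=> jp; apply/forallP => /(_ j).
by rewrite !vaddE scalevE !unitvE eqxx (negbTE jp) muln0 addn0 addn1 ltnn.
Qed.

Lemma K0_not_vle_a (s : vec h.+1) j t : j != p -> s K = 0 -> phi r s = r K + r j ->
  t * r p <= r K + r p -> ~~ vle s (a t).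
Proof.
move=> jp sK0 phi_s t_le; apply/negP => /forallP s_le.
have : vle s (scalev t (unitv p)).
  apply/forallP => x; case: (eqVneq x K) => [->|xK]; first by rewrite sK0.
  by move: (s_le x); rewrite !vaddE !unitvE (negbTE xK).
move/(leq_phi r); rewrite phiZ phi_unitv phi_s; have := ltr_p jp; lia.
Qed.

Lemma isolated_a t : t * r p <= r K + r p -> isolated (fun q => q \in P) (a t).
Proof.
move=> t_le q Pq; have not_vle s : s = q.1 \/ s = q.2 -> ~~ vle s (a t).
  move=> /(P_component Pq)[j jp [->|[sK0 phi_s]]].
    exact: w_not_vle_a.
  exact: K0_not_vle_a phi_s t_le.
by split; apply: not_vle; [left | right].
Qed.

Lemma complete_intersection_absurd i0 : i0 != K -> i0 != p -> False.
Proof.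
move=> i0K i0p; pose t := r K %/ r p + 1.
have [rK_le_t t_le] : r K <= t * r p /\ t * r p <= r K + r p.
  have := divn_eq (r K) (r p); have := ltn_pmod (r K) (gen_gt0 p).
  rewrite /t mulnDl mul1n; move: (_ %/ _) (_ %% _) => d m; lia.
have [c phi_c] : exists c, r K + t * r p - r i0 = phi r c by apply: phi_gtf; have := K_max i0; lia.
have /cong_gen_isolated : cong_gen (fun q => q \in P) (a t) (vadd (unitv i0) c).
  by apply/P_pres; rewrite !phiD phiZ !phi_unitv -phi_c; have := K_max i0; lia.
move=> /(_ (isolated_a t_le))/(congr1 (fun v : vec h.+1 => v i0)).
by rewrite !vaddE scalevE !unitvE eqxx (negbTE i0K) (negbTE i0p) muln0 => /eqP.
Qed.

End CompleteIntersection.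

End MinimalGenerators.

Unset Implicit Arguments.

Theorem proposition2p11 (G : nat -> Prop) (h : nat) (r : 'I_h.+1 -> nat) :
  numerical_semigroup G ->
  (exists n, ~ G n) ->
  minimally_generated_by G r ->
  complete_intersection r ->
  ~ is_multiplicity G 2 ->
  forall f, is_frobenius G f -> forall k : 'I_h.+1, r k < f.
Proof.
move=> _ _ [r_inj G_phi r_min] [P [P_uniq P_size [P_pres _]]] not_m2 f [Gf G_gtf] k.
rewrite ltnNge; apply/negP => le_fk.
pose K := [arg max_(i > k) r i]; pose p := [arg min_(i < k) r i].
have K_max i : r i <= r K by rewrite /K; case: arg_maxnP => // j _; apply.
have p_min i : r p <= r i by rewrite /p; case: arg_minnP => // j _; apply.
have fK : f < r K.
  rewrite (leq_trans _ (K_max k)) // ltn_neqAle le_fk andbT.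
  by apply/eqP => fk; apply: Gf; apply/G_phi; exists (unitv k); rewrite fk phi_unitv.
have [h0 | h_gt0] := posnP h.
  apply: (single_generator_absurd G_phi Gf G_gtf (i := K)) => x.
  by apply: val_inj => /=; have := ltn_ord x; have := ltn_ord K; lia.
have pK : p != K.
  apply: (argmin_neq_argmax (i := ord0) (j := ord_max) r_inj _ p_min K_max).
  by rewrite -val_eqE /= eq_sym -lt0n.
have [h_gt1 | h_le1] := ltnP 1 h.
  have [i0 /andP[i0K i0p]] := ord_third K p (h_gt1 : 2 < h.+1).
  exact: (complete_intersection_absurd G_phi r_min G_gtf r_inj P_pres P_uniq P_size
            p_min K_max pK fK i0K i0p).
apply: (two_generators_absurd G_phi r_min Gf G_gtf (p := p) (K := K)) => //.
- by move=> x; apply: ord_le2_cases.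
- by rewrite ltn_neqAle K_max andbT (inj_eq r_inj).
Qed.
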